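(* Let $V_1,V_2$ be finite-dimensional Euclidean vector spaces and let $F\in\Lambda^2(V_1\oplus V_2)\cong\mathfrak{so}(V_1\oplus V_2)$ be a nonzero 2-form which vanishes on $V_1\wedge V_1$ and on $V_2\wedge V_2$ (i.e. $F\in V_1\otimes V_2\subset\Lambda^2(V_1\oplus V_2)$). Let $\mathfrak{g}\subset\Lambda^2(V_1\oplus V_2)$ be the Lie algebra generated by the brackets $[F,X\wedge Y]$ with $X\in V_1$, $Y\in V_2$. Then $$\mathfrak{g}=\mathfrak{so}(V_1)\oplus\mathfrak{so}(V_2),$$ unless $\dim V_1=\dim V_2=2$.
   Context: 2-forms on the Euclidean space $V=V_1\oplus V_2$ (orthogonal sum) are identified with skew-symmetric endomorphisms via $(X\wedge Y)(Z)=\langle X,Z\rangle Y-\langle Y,Z\rangle X$, and the bracket is the commutator of endomorphisms. $\mathfrak{so}(V_1)\oplus\mathfrak{so}(V_2)$ denotes the subalgebra $\Lambda^2V_1\oplus\Lambda^2V_2\subset\Lambda^2(V_1\oplus V_2)$. *)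

(* Euclidean space V = V1 (+) V2 modelled as column vectors
   'cV[R]_(p + q) with the standard inner product <u,v> = u^T v;
   V1 = first p coordinates, V2 = last q coordinates. *)
From HB Require Import structures.
From mathcomp Require Import all_boot all_order all_algebra.
Set Implicit Arguments. Unset Strict Implicit. Unset Printing Implicit Defensive.
Import Order.TTheory GRing.Theory Num.Theory.
Local Open Scope ring_scope.

Section Defs.
Variable R : rcfType.
Variable n : nat.

(* (X /\ Y)(Z) = <X,Z> Y - <Y,Z> X, i.e. the matrix Y X^T - X Y^T *)
Definition wedge (X Y : 'cV[R]_n) : 'M[R]_n := Y *m X^T - X *m Y^T.

Definition lie (A B : 'M[R]_n) : 'M[R]_n := A *m B - B *m A.

Definition skew_mx (A : 'M[R]_n) : Prop := A^T = - A.

Definition subspace (P : 'M[R]_n -> Prop) : Prop :=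
  P 0 /\ (forall (a : R) A B, P A -> P B -> P (a *: A + B)).

Definition lie_subalgebra (P : 'M[R]_n -> Prop) : Prop :=
  subspace P /\ (forall A B, P A -> P B -> P (lie A B)).

Definition span_of (S : 'M[R]_n -> Prop) (A : 'M[R]_n) : Prop :=
  forall P, subspace P -> (forall B, S B -> P B) -> P A.

Definition lie_generated (S : 'M[R]_n -> Prop) (A : 'M[R]_n) : Prop :=
  forall P, lie_subalgebra P -> (forall B, S B -> P B) -> P A.

Definition form2 (A : 'M[R]_n) (X Y : 'cV[R]_n) : R := ((A *m X)^T *m Y) 0 0.

End Defs.

Definition inV1 (R : rcfType) (p q : nat) (x : 'cV[R]_p) : 'cV[R]_(p + q) :=
  col_mx x 0.
Definition inV2 (R : rcfType) (p q : nat) (y : 'cV[R]_q) : 'cV[R]_(p + q) :=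
  col_mx 0 y.

(* so(V1) (+) so(V2) = Lambda^2 V1 (+) Lambda^2 V2 inside Lambda^2 (V1 (+) V2):
   the span of all X /\ X' (X,X' in V1) and Y /\ Y' (Y,Y' in V2). *)
Definition so12 (R : rcfType) (p q : nat) : 'M[R]_(p + q) -> Prop :=
  span_of (fun B => (exists x x' : 'cV[R]_p, B = wedge (inV1 q x) (inV1 q x'))
                 \/ (exists y y' : 'cV[R]_q, B = wedge (inV2 p y) (inV2 p y'))).

Definition gens (R : rcfType) (p q : nat) (F : 'M[R]_(p + q)) : 'M[R]_(p + q) -> Prop :=
  fun B => exists (x : 'cV[R]_p) (y : 'cV[R]_q),
    B = lie F (wedge (inV1 q x) (inV2 p y)).

(* Write F = [[0, -M^T], [M, 0]] with M : V1 -> V2. The generator [F, x /\ y] equals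
   Mx /\ y - x /\ M^T y, so g consists of block-diagonal skew matrices and lies in
   so(V1) + so(V2). Conversely, by symmetry assume dim V1 <> 2; it suffices to get
   so(V1) inside g, since subtracting x /\ M^T y from a generator then leaves Mx /\ y.
   Bracketing a generator with an element of so(V1) kills its so(V2)-part, and a
   fixed x0 <> 0 with all x0 /\ z in g produces every z /\ z' via [x0 /\ z, x0 /\ z'].
   Such an x0 exists if M has a kernel or if some x is not an eigenvector of M^T M. Otherwise
   M^T M = lam with lam <> 0, brackets of generators give [so(V1), so(V1)], and this
   is all of so(V1) when dim V1 >= 3. *)

From HB Require Import structures.
From mathcomp Require Import all_boot all_order all_algebra.
From mathcomp Require Import ring.
From Stdlib Require Import Classical.
Import Order.TTheory GRing.Theory Num.Theory.
Local Open Scope ring_scope.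
Set Implicit Arguments. Unset Strict Implicit. Unset Printing Implicit Defensive.

Section Dot.
Variables (R : rcfType) (n : nat).
Implicit Types (u v w : 'cV[R]_n).

Definition dot u v : R := (u^T *m v) 0 0.

Lemma trmx_mul_col u v : u^T *m v = (dot u v)%:M.
Proof. exact: mx11_scalar. Qed.

Lemma dotC u v : dot u v = dot v u.
Proof.
have -> : dot u v = (u^T *m v)^T 0 0 by rewrite mxE.
by rewrite trmx_mul trmxK.
Qed.

Lemma dotDl u v w : dot (u + v) w = dot u w + dot v w.
Proof. by rewrite /dot linearD mulmxDl mxE. Qed.

Lemma dotZl a u w : dot (a *: u) w = a * dot u w.
Proof. by rewrite /dot linearZ -scalemxAl mxE. Qed.

Lemma dotDr u v w : dot w (u + v) = dot w u + dot w v.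
Proof. by rewrite dotC dotDl !(dotC w). Qed.

Lemma dotZr a u w : dot w (a *: u) = a * dot w u.
Proof. by rewrite dotC dotZl dotC. Qed.

Lemma dot0l u : dot 0 u = 0.
Proof. by rewrite /dot trmx0 mul0mx mxE. Qed.

Lemma dot0r u : dot u 0 = 0.
Proof. by rewrite dotC dot0l. Qed.

Lemma dotNl u w : dot (- u) w = - dot u w.
Proof. by rewrite -scaleN1r dotZl mulN1r. Qed.

Lemma dotNr u w : dot w (- u) = - dot w u.
Proof. by rewrite dotC dotNl dotC. Qed.

Lemma dot_eq0 u : dot u u = 0 -> u = 0.
Proof.
rewrite /dot mxE => /eqP; rewrite psumr_eq0 => [/allP u0|i _]; last first.
  by rewrite mxE -expr2 sqr_ge0.
apply/matrixP => i j; rewrite (ord1 j) !mxE.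
by have := u0 i (mem_index_enum i); rewrite mxE /= mulf_eq0 orbb => /eqP.
Qed.

Lemma dot_neq0 u : u != 0 -> dot u u != 0.
Proof. by apply: contraNneq => /dot_eq0 ->. Qed.

Lemma dot_delta (i j : 'I_n) :
  dot (delta_mx i 0) (delta_mx j 0) = (i == j)%:R.
Proof.
rewrite /dot mxE (bigD1 i) //= big1 => [|k nk]; last by rewrite !mxE (negbTE nk) mul0r.
by rewrite !mxE !eqxx /= andbT mul1r addr0.
Qed.

End Dot.

Lemma dot_mulmxl (R : rcfType) m n (A : 'M[R]_(m, n)) (u : 'cV[R]_n) (v : 'cV[R]_m) :
  dot (A *m u) v = dot u (A^T *m v).
Proof. by rewrite /dot trmx_mul mulmxA. Qed.

Lemma dot_col_mx (R : rcfType) p q (a c : 'cV[R]_p) (b d : 'cV[R]_q) :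
  dot (col_mx a b) (col_mx c d) = dot a c + dot b d.
Proof. by rewrite /dot tr_col_mx mul_row_col mxE. Qed.

Section Wedge.
Variables (R : rcfType) (n : nat).
Implicit Types (a b c d : 'cV[R]_n) (A B C : 'M[R]_n).

Lemma wedge_mulmx a b c : wedge a b *m c = dot a c *: b - dot b c *: a.
Proof. by rewrite /wedge mulmxBl -!mulmxA !trmx_mul_col !mul_mx_scalar. Qed.

Lemma wedgeE a b i j : wedge a b i j = b i 0 * a j 0 - a i 0 * b j 0.
Proof. by rewrite /wedge !mxE !big_ord1 !mxE. Qed.

Lemma wedgeC a b : wedge b a = - wedge a b.
Proof. by rewrite /wedge opprB. Qed.

Lemma wedgexx a : wedge a a = 0.
Proof. by rewrite /wedge subrr. Qed.

Lemma wedgeDl a b c : wedge (a + b) c = wedge a c + wedge b c.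
Proof.
rewrite /wedge linearD mulmxDr mulmxDl.
by apply/matrixP => i j; rewrite !mxE; ring.
Qed.

Lemma wedgeZl k a c : wedge (k *: a) c = k *: wedge a c.
Proof. by rewrite /wedge linearZ /= -scalemxAr -scalemxAl scalerBr. Qed.

Lemma wedgeDr c a b : wedge c (a + b) = wedge c a + wedge c b.
Proof. by rewrite wedgeC wedgeDl opprD -!wedgeC. Qed.

Lemma wedgeZr c k a : wedge c (k *: a) = k *: wedge c a.
Proof. by rewrite wedgeC wedgeZl -scalerN -wedgeC. Qed.

Lemma wedgeNl a c : wedge (- a) c = - wedge a c.
Proof. by rewrite -scaleN1r wedgeZl scaleN1r. Qed.

Lemma wedgeNr c a : wedge c (- a) = - wedge c a.
Proof. by rewrite -scaleN1r wedgeZr scaleN1r. Qed.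

Lemma wedgeBl a b c : wedge (a - b) c = wedge a c - wedge b c.
Proof. by rewrite wedgeDl wedgeNl. Qed.

Lemma wedgeBr c a b : wedge c (a - b) = wedge c a - wedge c b.
Proof. by rewrite wedgeDr wedgeNr. Qed.

Lemma wedge0l a : wedge 0 a = 0.
Proof. by rewrite -(scale0r 0) wedgeZl scale0r. Qed.

Lemma wedge0r a : wedge a 0 = 0.
Proof. by rewrite -(scale0r 0) wedgeZr scale0r. Qed.

Lemma wedge_skew a b : skew_mx (wedge a b).
Proof. by rewrite /skew_mx /wedge linearB /= !trmx_mul !trmxK opprB. Qed.

Lemma lieDl A B C : lie (A + B) C = lie A C + lie B C.
Proof. by rewrite /lie mulmxDl mulmxDr addrACA opprD. Qed.

Lemma lieZl k A C : lie (k *: A) C = k *: lie A C.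
Proof. by rewrite /lie -scalemxAl -scalemxAr scalerBr. Qed.

Lemma lieNl A C : lie (- A) C = - lie A C.
Proof. by rewrite -scaleN1r lieZl scaleN1r. Qed.

Lemma lieBl A B C : lie (A - B) C = lie A C - lie B C.
Proof. by rewrite lieDl lieNl. Qed.

Lemma lieC A B : lie B A = - lie A B.
Proof. by rewrite /lie opprB. Qed.

Lemma lieZr k A C : lie C (k *: A) = k *: lie C A.
Proof. by rewrite lieC lieZl lieC scalerN opprK. Qed.

Lemma lieBr A B C : lie C (A - B) = lie C A - lie C B.
Proof. by rewrite /lie mulmxBr mulmxBl; apply/matrixP => i j; rewrite !mxE; ring. Qed.

Lemma lie_skew_wedge A c d : skew_mx A ->
  lie A (wedge c d) = wedge (A *m c) d + wedge c (A *m d).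
Proof.
rewrite /skew_mx => skA; rewrite /lie /wedge !trmx_mul skA.
rewrite !mulmxN !mulmxBr !mulmxBl !mulmxA.
move: (A *m d *m c^T) (A *m c *m d^T) (d *m c^T *m A) (c *m d^T *m A) => X Y Z W.
by apply/matrixP => i j; rewrite !mxE; ring.
Qed.

Lemma lie_wedge a b c d :
  lie (wedge a b) (wedge c d) = dot a c *: wedge b d - dot b c *: wedge a d
    + dot a d *: wedge c b - dot b d *: wedge c a.
Proof.
rewrite (lie_skew_wedge _ _ (wedge_skew a b)) !wedge_mulmx wedgeBl wedgeBr !wedgeZl !wedgeZr.
move: (wedge b d) (wedge a d) (wedge c b) (wedge c a) => X Y Z W.
by apply/matrixP => i j; rewrite !mxE; ring.
Qed.

End Wedge.

Ltac wedge_field :=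
  repeat match goal with |- context [wedge ?a ?b] => generalize (wedge a b) end;
  move=> *; apply/matrixP => ? ?; rewrite !mxE; field.

Section Subspace.
Variables (R : rcfType) (n : nat).
Implicit Types (S P : 'M[R]_n -> Prop) (A B : 'M[R]_n).

Lemma subspaceD P A B : subspace P -> P A -> P B -> P (A + B).
Proof. by case=> _ PZD PA PB; rewrite -[A]scale1r; apply: PZD. Qed.

Lemma subspaceZ P a A : subspace P -> P A -> P (a *: A).
Proof. by case=> P0 PZD PA; have := PZD a A 0 PA P0; rewrite addr0. Qed.

Lemma subspace_sum P I (r : seq I) (Q : pred I) (F : I -> 'M[R]_n) :
  subspace P -> (forall i, Q i -> P (F i)) -> P (\sum_(i <- r | Q i) F i).
Proof.
move=> sP PF; apply: big_ind => //; first by case: sP.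
by move=> A B; apply: subspaceD.
Qed.

Lemma span_subspace S : subspace (span_of S).
Proof.
split=> [P [P0 _] _ //|a A B SA SB P sP PS].
by case: (sP) => _ PZD; apply: PZD; [apply: SA | apply: SB].
Qed.

Lemma mem_span S B : S B -> span_of S B.
Proof. by move=> SB P _; apply. Qed.

Lemma lie_generated_subalgebra S : lie_subalgebra (lie_generated S).
Proof.
split; first split=> [P [[P0 _] _] _ //|a A B SA SB P sP PS].
  by case: (sP) => -[_ PZD] _; apply: PZD; [apply: SA | apply: SB].
move=> A B SA SB P sP PS; case: (sP) => _ Plie.
by apply: Plie; [apply: SA | apply: SB].
Qed.

Lemma mem_lie_generated S B : S B -> lie_generated S B.
Proof. by move=> SB P _; apply. Qed.

End Subspace.

Lemma span_of_image (R : rcfType) m k (S : 'M[R]_m -> Prop) (T : 'M[R]_k -> Prop)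
    (f : 'M[R]_m -> 'M[R]_k) :
  linear f -> (forall B, S B -> T (f B)) -> forall A, span_of S A -> span_of T (f A).
Proof.
move=> f_lin ST A SA P sP PT; have [P0 PZD] := sP.
apply: (SA (fun B => P (f B))) => [|B /ST /PT //].
split=> [|a B C PB PC]; last by rewrite f_lin; apply: PZD.
by have := f_lin (-1) 0 0; rewrite scaler0 addr0 scaleN1r addNr => ->.
Qed.

Section Subalgebra.
Variables (R : rcfType) (n : nat) (g : 'M[R]_n -> Prop).
Hypothesis gsub : lie_subalgebra g.
Implicit Types (A B : 'M[R]_n).

Lemma lie_sub0 : g 0.
Proof. by case: gsub => -[]. Qed.

Lemma lie_subZD a A B : g A -> g B -> g (a *: A + B).
Proof. by case: gsub => -[_ gZD] _; apply: gZD. Qed.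

Lemma lie_subZ a A : g A -> g (a *: A).
Proof. by move=> gA; rewrite -[_ *: _]addr0; apply: lie_subZD gA lie_sub0. Qed.

Lemma lie_subD A B : g A -> g B -> g (A + B).
Proof. by rewrite -{2}[A]scale1r; apply: lie_subZD. Qed.

Lemma lie_subN A : g A -> g (- A).
Proof. by rewrite -scaleN1r; apply: lie_subZ. Qed.

Lemma lie_subB A B : g A -> g B -> g (A - B).
Proof. by move=> gA /lie_subN; apply: lie_subD. Qed.

Lemma lie_sub_lie A B : g A -> g B -> g (lie A B).
Proof. by case: gsub => _ glie; apply: glie. Qed.

(* [[x0 /\ z, x0 /\ z'] = |x0|^2 z /\ z' + (multiples of x0 /\ z and x0 /\ z')] *)
Lemma lie_sub_wedge_pivot (x0 z z' : 'cV[R]_n) : x0 != 0 ->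
  g (wedge x0 z) -> g (wedge x0 z') -> g (wedge z z').
Proof.
move=> x0_neq0 gz gz'.
have -> : wedge z z' = (dot x0 x0)^-1 *: (lie (wedge x0 z) (wedge x0 z')
   + dot z x0 *: wedge x0 z' - dot x0 z' *: wedge x0 z).
  by rewrite lie_wedge wedgexx; have := dot_neq0 x0_neq0; wedge_field.
apply/lie_subZ/lie_subB; last exact/lie_subZ.
by apply: lie_subD; [exact: lie_sub_lie | exact: lie_subZ].
Qed.

End Subalgebra.

Section Matrices.
Variable R : rcfType.

Lemma mulmx_col_eq0 m n (A : 'M[R]_(m, n)) : (forall c : 'cV_n, A *m c = 0) -> A = 0.
Proof.
move=> A0; apply/matrixP => i j.
by have /matrixP/(_ i 0) := A0 (delta_mx j 0); rewrite -colE !mxE.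
Qed.

Lemma mulmx_col_neq0 m n (A : 'M[R]_(m, n)) : A != 0 -> exists c : 'cV_n, A *m c != 0.
Proof.
case/matrix0Pn => i [j Aij]; exists (delta_mx j 0).
by apply/matrix0Pn; exists i, 0; rewrite -colE mxE.
Qed.

Lemma trmx_surj_of_inj m n (A : 'M[R]_(m, n)) :
  (forall x : 'cV_n, A *m x = 0 -> x = 0) -> forall u : 'cV_n, exists y : 'cV_m, A^T *m y = u.
Proof.
move=> A_inj u.
have : row_free A^T.
  rewrite -kermx_eq0; apply/eqP/row_matrixP => i; rewrite row0.
  apply: trmx_inj; rewrite trmx0; apply: A_inj.
  by rewrite -[A in A *m _]trmxK -trmx_mul -row_mul mulmx_ker row0 trmx0.
rewrite /row_free mxrank_tr => /eqP A_full.
have /submxP [D uD] : (u^T <= A)%MS by rewrite submx_full // /row_full A_full.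
by exists D^T; rewrite -[u]trmxK uD trmx_mul.
Qed.

Lemma is_scalar_mx_of_wedge n (S : 'M[R]_n) :
  (forall x : 'cV_n, wedge x (S *m x) = 0) -> is_scalar_mx S.
Proof.
case: n S => [|n] S Sx_wedge.
  by apply/is_scalar_mxP; exists 0; apply/matrixP => -[].
have offdiag i j : i != j -> S j i = 0.
  move=> ij; have /matrixP/(_ j i) := Sx_wedge (delta_mx i 0).
  by rewrite wedgeE -colE !mxE !eqxx eq_sym (negbTE ij) /= mulr1 mul0r subr0.
have diag i j : S i i = S j j.
  have [-> // | ij] := eqVneq i j.
  have /matrixP/(_ i j) := Sx_wedge (delta_mx i 0 + delta_mx j 0).
  rewrite wedgeE mulmxDr -!colE !mxE !eqxx (negbTE ij) eq_sym (negbTE ij) /=.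
  rewrite (offdiag i j ij) (offdiag j i); last by rewrite eq_sym.
  by rewrite !addr0 !add0r mulr1 mul1r => /eqP; rewrite subr_eq0 => /eqP.
apply/is_scalar_mxP; exists (S 0 0); apply/matrixP => i j; rewrite mxE.
have [<- | ij] := eqVneq i j; first by rewrite mulr1n (diag i 0).
by rewrite mulr0n (offdiag j i) // eq_sym.
Qed.

Lemma delta_mx_neq0 m n (i : 'I_m) (j : 'I_n) : delta_mx i j != 0 :> 'M[R]_(m, n).
Proof. by apply/matrix0Pn; exists i, j; rewrite mxE !eqxx oner_neq0. Qed.

Lemma colinear_dim_le1 k (x x' : 'cV[R]_k) : (k <= 1)%N ->
  exists a b (d : 'cV[R]_k), x = a *: d /\ x' = b *: d.
Proof.
case: k x x' => [|[|//]] x x' _; first by exists 0, 0, 0; rewrite scaler0; split; apply: flatmx0.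
by exists (x 0 0), (x' 0 0), 1%:M; rewrite !scalemx1 -!mx11_scalar.
Qed.

Lemma skew_mx_span k (P : 'M[R]_k) :
  skew_mx P -> span_of (fun B => exists x x' : 'cV_k, B = wedge x x') P.
Proof.
move=> skP.
have sum_delta (f : 'I_k -> 'I_k -> R) :
    \sum_i \sum_j f i j *: delta_mx i j = \matrix_(i, j) f i j.
  by rewrite [RHS]matrix_sum_delta; apply: eq_bigr => i _; apply: eq_bigr => j _; rewrite mxE.
have -> : P = \sum_i \sum_j (P i j / 2) *: wedge (delta_mx j 0) (delta_mx i 0).
  under eq_bigr do under eq_bigr do rewrite /wedge !trmx_delta !mul_delta_mx scalerBr.
  under eq_bigr do rewrite sumrB.
  rewrite sumrB sum_delta exchange_big /= sum_delta.
  apply/matrixP => a b; have /matrixP/(_ b a) := skP; rewrite !mxE => ->.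
  by field.
apply: subspace_sum (span_subspace _) _ => i _.
apply: subspace_sum (span_subspace _) _ => j _.
apply: subspaceZ (span_subspace _) _; apply: mem_span.
by exists (delta_mx j 0), (delta_mx i 0).
Qed.

End Matrices.

(* Abstracting the two summands as isometric embeddings lets the argument for V1 be
   reused for V2, with M replaced by [- M^T]. *)
Record offdiag_setting (R : rcfType) (n k1 k2 : nat) (F : 'M[R]_n) (M : 'M[R]_(k2, k1))
    (e1 : {linear 'cV[R]_k1 -> 'cV[R]_n}) (e2 : {linear 'cV[R]_k2 -> 'cV[R]_n})
    (g : 'M[R]_n -> Prop) : Prop := OffdiagSetting {
  dot_e1 : forall u v, dot (e1 u) (e1 v) = dot u v;
  dot_e2 : forall u v, dot (e2 u) (e2 v) = dot u v;
  dot_e12 : forall u v, dot (e1 u) (e2 v) = 0;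
  F_skew : skew_mx F;
  F_e1 : forall x, F *m e1 x = e2 (M *m x);
  F_e2 : forall y, F *m e2 y = - e1 (M^T *m y);
  M_neq0 : M != 0;
  g_subalgebra : lie_subalgebra g;
  g_gens : forall x y, g (lie F (wedge (e1 x) (e2 y)))
}.

Section Offdiag.
Variables (R : rcfType) (n k1 k2 : nat) (F : 'M[R]_n) (M : 'M[R]_(k2, k1)).
Variables (e1 : {linear 'cV[R]_k1 -> 'cV[R]_n}) (e2 : {linear 'cV[R]_k2 -> 'cV[R]_n}).
Variable g : 'M[R]_n -> Prop.
Hypothesis st : offdiag_setting F M e1 e2 g.
Let gsub := g_subalgebra st.

Definition so1_sub := forall x x', g (wedge (e1 x) (e1 x')).
Definition so2_sub := forall y y', g (wedge (e2 y) (e2 y')).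

Lemma dot_e21 y x : dot (e2 y) (e1 x) = 0.
Proof. by rewrite dotC (dot_e12 st). Qed.

Lemma e1_neq0 x : x != 0 -> e1 x != 0.
Proof. by move=> /dot_neq0; rewrite -(dot_e1 st); apply: contraNneq => ->; rewrite dot0l. Qed.

Lemma e2_neq0 y : y != 0 -> e2 y != 0.
Proof. by move=> /dot_neq0; rewrite -(dot_e2 st); apply: contraNneq => ->; rewrite dot0l. Qed.

Lemma lie_F_wedge12 x y : lie F (wedge (e1 x) (e2 y)) =
  wedge (e2 (M *m x)) (e2 y) - wedge (e1 x) (e1 (M^T *m y)).
Proof. by rewrite (lie_skew_wedge _ _ (F_skew st)) (F_e1 st) (F_e2 st) wedgeNr. Qed.

Lemma g_gen x y : g (wedge (e2 (M *m x)) (e2 y) - wedge (e1 x) (e1 (M^T *m y))).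
Proof. by rewrite -lie_F_wedge12; apply: (g_gens st). Qed.

Lemma lie_wedge21 a b c d : lie (wedge (e2 a) (e2 b)) (wedge (e1 c) (e1 d)) = 0.
Proof. by rewrite lie_wedge !dot_e21 !scale0r !subr0 addr0. Qed.

Lemma so1_sub_of_pivot (x0 : 'cV[R]_k1) :
  x0 != 0 -> (forall z, g (wedge (e1 x0) (e1 z))) -> so1_sub.
Proof.
by move=> x0_neq0 gx0 x x'; apply: (lie_sub_wedge_pivot gsub (e1_neq0 x0_neq0)).
Qed.

Lemma so2_sub_of_pivot (y0 : 'cV[R]_k2) :
  y0 != 0 -> (forall z, g (wedge (e2 y0) (e2 z))) -> so2_sub.
Proof.
by move=> y0_neq0 gy0 y y'; apply: (lie_sub_wedge_pivot gsub (e2_neq0 y0_neq0)).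
Qed.

Lemma so1_sub_of_kernel (x0 : 'cV[R]_k1) : x0 != 0 -> M *m x0 = 0 -> so1_sub.
Proof.
move=> x0_neq0 Mx0.
have /mulmx_col_neq0 [y0 u_neq0] : M^T != 0 by rewrite trmx_eq0 (M_neq0 st).
set u := M^T *m y0 in u_neq0 *.
have gx0u : g (wedge (e1 x0) (e1 u)).
  by have /(lie_subN gsub) := g_gen x0 y0; rewrite Mx0 linear0 wedge0l sub0r opprK.
have ux0 : dot u x0 = 0 by rewrite dot_mulmxl trmxK Mx0 dot0r.
apply: (so1_sub_of_pivot x0_neq0) => z.
have glie : g (lie (wedge (e1 z) (e1 u)) (wedge (e1 x0) (e1 u))).
  have := lie_sub_lie gsub (g_gen z y0) gx0u; rewrite lieBl lie_wedge21 sub0r.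
  by move/(lie_subN gsub); rewrite opprK.
have -> : wedge (e1 x0) (e1 z) = (dot u u)^-1 *: (dot z u *: wedge (e1 x0) (e1 u)
    - lie (wedge (e1 z) (e1 u)) (wedge (e1 x0) (e1 u))).
  by rewrite lie_wedge !(dot_e1 st) ux0 wedgexx; have := dot_neq0 u_neq0; wedge_field.
by apply/(lie_subZ gsub)/(lie_subB gsub) => //; exact: (lie_subZ gsub _ gx0u).
Qed.

Lemma so2_sub_of_so1_sub : so1_sub -> so2_sub.
Proof.
move=> g11; have [x1 Mx1_neq0] := mulmx_col_neq0 (M_neq0 st).
apply: (so2_sub_of_pivot Mx1_neq0) => y.
by have := lie_subD gsub (g_gen x1 y) (g11 x1 (M^T *m y)); rewrite subrK.
Qed.

Lemma so1_sub_of_non_eigen (x : 'cV[R]_k1) : (forall u : 'cV_k1, exists y, M^T *m y = u) ->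
  wedge x (M^T *m (M *m x)) != 0 -> so1_sub.
Proof.
set s := M^T *m (M *m x) => MT_surj xs_neq0.
have gxs : g (wedge (e1 x) (e1 s)).
  by have /(lie_subN gsub) := g_gen x (M *m x); rewrite wedgexx sub0r opprK.
have x_neq0 : x != 0 by apply: contraNneq xs_neq0 => ->; rewrite wedge0l.
pose b := s - (dot s x / dot x x) *: x.
have xb_xs : wedge (e1 x) (e1 b) = wedge (e1 x) (e1 s).
  by rewrite linearB linearZ wedgeBr wedgeZr wedgexx scaler0 subr0.
have xb : dot x b = 0.
  by rewrite dotDr dotNr dotZr (dotC x s) mulfVK ?subrr ?dot_neq0.
have b_neq0 : b != 0.
  apply: contraNneq xs_neq0 => b0.
  by rewrite -[s](subrK ((dot s x / dot x x) *: x)) -/b b0 add0r wedgeZr wedgexx scaler0.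
apply: (so1_sub_of_pivot b_neq0) => c; have [y MTy] := MT_surj c.
have glie : g (lie (wedge (e1 x) (e1 c)) (wedge (e1 x) (e1 b))).
  have := lie_sub_lie gsub (g_gen x y) gxs; rewrite MTy -xb_xs lieBl lie_wedge21 sub0r.
  by move/(lie_subN gsub); rewrite opprK.
have -> : wedge (e1 b) (e1 c) = - (dot x x)^-1 *: (lie (wedge (e1 x) (e1 c)) (wedge (e1 x) (e1 b))
    + dot c x *: wedge (e1 x) (e1 b)).
  rewrite lie_wedge !(dot_e1 st) xb wedgexx [wedge (e1 c) (e1 b)]wedgeC.
  by have := dot_neq0 x_neq0; wedge_field.
by apply/(lie_subZ gsub)/(lie_subD gsub) => //; rewrite xb_xs; exact: (lie_subZ gsub _ gxs).
Qed.

Lemma lie_wedge12 a b c d : lie (wedge (e1 a) (e1 b)) (wedge (e2 c) (e2 d)) = 0.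
Proof. by rewrite lie_wedge !(dot_e12 st) !scale0r !subr0 addr0. Qed.

Lemma lie_wedge11_of_conformal (lam : R) : lam != 0 -> M^T *m M = lam%:M ->
  forall x z x' z', g (lie (wedge (e1 x) (e1 z)) (wedge (e1 x') (e1 z'))).
Proof.
move=> lam_neq0 MTM.
have dotM a b : dot (M *m a) (M *m b) = lam * dot a b.
  by rewrite dot_mulmxl mulmxA MTM mul_scalar_mx dotZr.
pose H a b := wedge (e2 (M *m a)) (e2 (M *m b)) - lam *: wedge (e1 a) (e1 b).
have gH a b : g (H a b).
  by have := g_gen a (M *m b); rewrite mulmxA MTM mul_scalar_mx linearZ wedgeZr.
move=> x z x' z'.
(* The cross terms vanish and [M^T M = lam] turns the V2-part back into generators. *)
have -> : lie (wedge (e1 x) (e1 z)) (wedge (e1 x') (e1 z')) =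
  (2 * lam ^+ 2)^-1 *: (lie (H x z) (H x' z') - lam *: (dot x x' *: H z z'
     - dot z x' *: H x z' + dot x z' *: H x' z - dot z z' *: H x' x)).
  have lie_expand (A B C D : 'M_n) k l : lie (A - k *: B) (C - l *: D) =
      lie A C - l *: lie A D - k *: lie B C + (k * l) *: lie B D.
    rewrite lieBl !lieBr !lieZl !lieZr.
    move: (lie A C) (lie A D) (lie B C) (lie B D) => *.
    by apply/matrixP => i j; rewrite !mxE; ring.
  rewrite /H lie_expand lie_wedge21 lie_wedge12 !lie_wedge.
  rewrite !(dot_e2 st) !dotM !(dot_e1 st).
  by move: lam_neq0; wedge_field.
apply/(lie_subZ gsub)/(lie_subB gsub); first exact: (lie_sub_lie gsub).
apply/(lie_subZ gsub)/(lie_subB gsub); last exact: (lie_subZ gsub).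
apply: (lie_subD gsub); last exact: (lie_subZ gsub).
by apply: (lie_subB gsub); exact: (lie_subZ gsub).
Qed.

Lemma so1_sub_of_derived : (2 < k1)%N ->
  (forall x z x' z', g (lie (wedge (e1 x) (e1 z)) (wedge (e1 x') (e1 z')))) -> so1_sub.
Proof.
move=> k1_gt2 g_derived.
pose E (j : 'I_k1) := e1 (delta_mx j 0).
have dotE i j : dot (E i) (E j) = (i == j)%:R by rewrite (dot_e1 st) dot_delta.
pose i0 : 'I_k1 := Ordinal (ltn_trans (isT : (0 < 2)%N) k1_gt2).
pose i1 : 'I_k1 := Ordinal (ltn_trans (isT : (1 < 2)%N) k1_gt2).
pose i2 : 'I_k1 := Ordinal k1_gt2.
(* For j <> i0, pick k outside {i0, j}: then [E i0 /\ E k, E k /\ E j] = - E i0 /\ E j. *)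
have gE j : g (wedge (E i0) (E j)).
  have [-> | j_neq_i0] := eqVneq j i0; first by rewrite wedgexx; exact: lie_sub0.
  pose k := if j == i1 then i2 else i1.
  have i0k : (i0 == k) = false by rewrite /k; case: ifP.
  have kj : (k == j) = false by rewrite /k; case: ifP => [/eqP -> // | ]; rewrite eq_sym => ->.
  have := lie_subN gsub (g_derived (delta_mx i0 0) (delta_mx k 0) (delta_mx k 0) (delta_mx j 0)).
  rewrite -/(E i0) -/(E k) -/(E j) lie_wedge !dotE i0k kj eqxx eq_sym (negbTE j_neq_i0).
  by rewrite !scale0r scale1r !subr0 add0r addr0 opprK.
apply: (@so1_sub_of_pivot (delta_mx i0 0)); first exact: delta_mx_neq0.
move=> z; rewrite [z]matrix_sum_delta linear_sum /=.
rewrite (big_morph _ (wedgeDr _) (wedge0r _)); apply: subspace_sum (proj1 gsub) _ => i _.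
by rewrite big_ord1 linearZ wedgeZr; exact: (lie_subZ gsub _ (gE i)).
Qed.

Lemma so_sub_of_dim_neq2 : k1 != 2 -> so1_sub /\ so2_sub.
Proof.
move=> k1_neq2; suff g11 : so1_sub by split; last exact: so2_sub_of_so1_sub.
have [k1_le1 | k1_gt1] := leqP k1 1.
  move=> x x'; have [a [b [d [-> ->]]]] := colinear_dim_le1 x x' k1_le1.
  by rewrite !linearZ wedgeZl wedgeZr wedgexx !scaler0; exact: lie_sub0.
have k1_gt2 : (2 < k1)%N by rewrite ltn_neqAle eq_sym k1_neq2.
have [[x0 [x0_neq0 Mx0]] | M_ker0] := classic (exists x0 : 'cV_k1, x0 != 0 /\ M *m x0 = 0).
  exact: so1_sub_of_kernel x0_neq0 Mx0.
have M_inj (x : 'cV_k1) : M *m x = 0 -> x = 0.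
  by move=> Mx; apply: NNPP => x_neq0; apply: M_ker0; exists x; split=> //; apply/eqP.
have [/is_scalar_mxP [lam MTM] | MTM_nscalar] := boolP (is_scalar_mx (M^T *m M)).
  apply: (so1_sub_of_derived k1_gt2); apply: (lie_wedge11_of_conformal _ MTM).
  pose i0 : 'I_k1 := Ordinal (ltn_trans (isT : (0 < 2)%N) k1_gt2).
  apply/eqP => lam0; have /eqP := delta_mx_neq0 R i0 (0 : 'I_1); apply; apply: M_inj.
  by apply: dot_eq0; rewrite dot_mulmxl mulmxA MTM lam0 mul_scalar_mx scale0r dot0r.
have [x xs_neq0] : exists x, wedge x (M^T *m (M *m x)) != 0.
  apply: NNPP => no_x; apply: (negP MTM_nscalar); apply: is_scalar_mx_of_wedge => x.
  by rewrite -mulmxA; apply: NNPP => xs_neq0; apply: no_x; exists x; apply/eqP.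
exact: so1_sub_of_non_eigen (trmx_surj_of_inj M_inj) xs_neq0.
Qed.

End Offdiag.

Section Blocks.
Variables (R : rcfType) (p q : nat).

Lemma inV1_linear : linear (@inV1 R p q).
Proof. by move=> a u v; rewrite /inV1 scale_col_mx add_col_mx scaler0 addr0. Qed.

Lemma inV2_linear : linear (@inV2 R p q).
Proof. by move=> a u v; rewrite /inV2 scale_col_mx add_col_mx scaler0 addr0. Qed.

HB.instance Definition _ :=
  GRing.isLinear.Build R 'cV[R]_p 'cV[R]_(p + q) _ (@inV1 R p q) inV1_linear.
HB.instance Definition _ :=
  GRing.isLinear.Build R 'cV[R]_q 'cV[R]_(p + q) _ (@inV2 R p q) inV2_linear.

Lemma dot_inV1 (u v : 'cV[R]_p) : dot (inV1 q u) (inV1 q v) = dot u v.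
Proof. by rewrite dot_col_mx dot0l addr0. Qed.

Lemma dot_inV2 (u v : 'cV[R]_q) : dot (inV2 p u) (inV2 p v) = dot u v.
Proof. by rewrite dot_col_mx dot0l add0r. Qed.

Lemma dot_inV12 (u : 'cV[R]_p) (v : 'cV[R]_q) : dot (inV1 q u) (inV2 p v) = 0.
Proof. by rewrite dot_col_mx dot0l dot0r addr0. Qed.

Lemma wedge_inV1 (a b : 'cV[R]_p) :
  wedge (inV1 q a) (inV1 q b) = block_mx (wedge a b) 0 0 0.
Proof.
rewrite /wedge /inV1 !tr_col_mx !mul_col_row !trmx0 !mulmx0 !mul0mx.
by rewrite opp_block_mx add_block_mx !subrr.
Qed.

Lemma wedge_inV2 (a b : 'cV[R]_q) :
  wedge (inV2 p a) (inV2 p b) = block_mx 0 0 0 (wedge a b).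
Proof.
rewrite /wedge /inV2 !tr_col_mx !mul_col_row !trmx0 !mulmx0 !mul0mx.
by rewrite opp_block_mx add_block_mx !subrr.
Qed.

Lemma skew_offdiag_block (F : 'M[R]_(p + q)) : skew_mx F ->
  (forall x x' : 'cV[R]_p, form2 F (inV1 q x) (inV1 q x') = 0) ->
  (forall y y' : 'cV[R]_q, form2 F (inV2 p y) (inV2 p y') = 0) ->
  F = block_mx 0 (- (dlsubmx F)^T) (dlsubmx F) 0.
Proof.
move=> skF F11 F22.
have F_inV1 x : F *m inV1 q x = col_mx (ulsubmx F *m x) (dlsubmx F *m x).
  by rewrite -{1}(submxK F) mul_block_col !mulmx0 !addr0.
have F_inV2 y : F *m inV2 p y = col_mx (ursubmx F *m y) (drsubmx F *m y).
  by rewrite -{1}(submxK F) mul_block_col !mulmx0 !add0r.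
have ul0 : ulsubmx F = 0.
  apply: mulmx_col_eq0 => x; apply: dot_eq0; have := F11 x (ulsubmx F *m x).
  by rewrite /form2 -/(dot _ _) F_inV1 dot_col_mx dot0r addr0.
have dr0 : drsubmx F = 0.
  apply: mulmx_col_eq0 => y; apply: dot_eq0; have := F22 y (drsubmx F *m y).
  by rewrite /form2 -/(dot _ _) F_inV2 dot_col_mx dot0r add0r.
have := skF; rewrite /skew_mx -{1 2}(submxK F) tr_block_mx opp_block_mx.
case/eq_block_mx => _ _ ur _.
by rewrite -{1}(submxK F) ul0 dr0 -[ursubmx F]trmxK ur linearN.
Qed.

Definition block_diag_skew (A : 'M[R]_(p + q)) : Prop :=
  exists (P : 'M[R]_p) (Q : 'M[R]_q), [/\ skew_mx P, skew_mx Q & A = block_mx P 0 0 Q].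

Lemma block_diag_skew_subalgebra : lie_subalgebra block_diag_skew.
Proof.
split; first split.
- by exists 0, 0; split; rewrite /skew_mx ?trmx0 ?oppr0 ?block_mx0.
- move=> a _ _ [P [Q [skP skQ ->]]] [P' [Q' [skP' skQ' ->]]].
  exists (a *: P + P'), (a *: Q + Q'); split.
  + by rewrite /skew_mx linearD linearZ /= skP skP' scalerN opprD.
  + by rewrite /skew_mx linearD linearZ /= skQ skQ' scalerN opprD.
  + by rewrite scale_block_mx add_block_mx !scaler0 !addr0.
move=> _ _ [P [Q [skP skQ ->]]] [P' [Q' [skP' skQ' ->]]].
exists (lie P P'), (lie Q Q'); split.
- by rewrite /skew_mx /lie linearB /= !trmx_mul skP skP' !mulmxN !mulNmx !opprK opprB.
- by rewrite /skew_mx /lie linearB /= !trmx_mul skQ skQ' !mulmxN !mulNmx !opprK opprB.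
rewrite /lie !mulmx_block !mulmx0 !mul0mx !addr0 !add0r opp_block_mx add_block_mx.
by rewrite !subrr.
Qed.

Lemma so12_block_diag_skew A : block_diag_skew A -> so12 A.
Proof.
move=> [P [Q [skP skQ ->]]].
have -> : block_mx P 0 0 Q = block_mx P 0 0 0 + block_mx 0 0 0 Q.
  by rewrite add_block_mx !addr0 add0r.
apply: subspaceD (span_subspace _) _ _.
- apply: (span_of_image (f := fun X => block_mx X 0 0 0)) (skew_mx_span skP).
    by move=> a X Y; rewrite scale_block_mx add_block_mx !scaler0 !addr0.
  by move=> _ [x [x' ->]]; left; exists x, x'; rewrite wedge_inV1.
- apply: (span_of_image (f := fun X => block_mx 0 0 0 X)) (skew_mx_span skQ).
    by move=> a X Y; rewrite scale_block_mx add_block_mx !scaler0 !addr0.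
  by move=> _ [y [y' ->]]; right; exists y, y'; rewrite wedge_inV2.
Qed.

End Blocks.

Section OffdiagBlock.
Variables (R : rcfType) (p q : nat) (M : 'M[R]_(q, p)).
Hypothesis M_neq0 : M != 0.
Let F := block_mx 0 (- M^T) M 0.
Let g := lie_generated (gens F).

Lemma offdiag_skew : skew_mx F.
Proof. by rewrite /skew_mx tr_block_mx !trmx0 linearN /= trmxK opp_block_mx !oppr0 opprK. Qed.

Lemma offdiag_inV1 x : F *m inV1 q x = inV2 p (M *m x).
Proof. by rewrite mul_block_col !mul0mx !mulmx0 !addr0. Qed.

Lemma offdiag_inV2 y : F *m inV2 p y = - inV1 q (M^T *m y).
Proof. by rewrite mul_block_col !mul0mx !mulmx0 !add0r mulNmx /inV1 opp_col_mx oppr0. Qed.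

Lemma offdiag_setting_V1 : offdiag_setting F M (@inV1 R p q) (@inV2 R p q) g.
Proof.
split; [exact: dot_inV1 | exact: dot_inV2 | exact: dot_inV12 | exact: offdiag_skew
  | exact: offdiag_inV1 | exact: offdiag_inV2 | exact: M_neq0
  | exact: lie_generated_subalgebra | ].
by move=> x y; apply: mem_lie_generated; exists x, y.
Qed.

Lemma offdiag_setting_V2 : offdiag_setting F (- M^T) (@inV2 R p q) (@inV1 R p q) g.
Proof.
split=> [||u v||y|x|||y x]; [exact: dot_inV2 | exact: dot_inV1 | | exact: offdiag_skew
  | | | | exact: lie_generated_subalgebra | ].
- by rewrite dotC dot_inV12.
- by rewrite offdiag_inV2 mulNmx linearN.
- by rewrite offdiag_inV1 linearN /= trmxK mulNmx linearN opprK.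
- by rewrite oppr_eq0 trmx_eq0.
rewrite wedgeC -scaleN1r lieZr; apply: (lie_subZ (lie_generated_subalgebra (gens F))).
by apply: mem_lie_generated; exists x, y.
Qed.

Lemma block_diag_skew_gens B : gens F B -> block_diag_skew B.
Proof.
move=> [x [y ->]]; rewrite (lie_F_wedge12 offdiag_setting_V1) wedge_inV1 wedge_inV2.
exists (- wedge x (M^T *m y)), (wedge (M *m x) y); split.
- by rewrite /skew_mx linearN /= wedge_skew.
- exact: wedge_skew.
- by rewrite opp_block_mx add_block_mx !oppr0 !addr0 add0r.
Qed.

Lemma lie_generated_offdiag : ~ (p = 2%N /\ q = 2%N) ->
  forall A, lie_generated (gens F) A <-> so12 A.
Proof.
move=> not22 A; split=> [gA | so12A].
  apply: so12_block_diag_skew; apply: gA; first exact: block_diag_skew_subalgebra.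
  exact: block_diag_skew_gens.
have [g11 g22] : so1_sub (@inV1 R p q) g /\ so2_sub (@inV2 R p q) g.
  have [p2 | p_neq2] := eqVneq p 2; last exact: so_sub_of_dim_neq2 offdiag_setting_V1 p_neq2.
  have q_neq2 : q != 2 by apply/eqP => q2; apply: not22.
  by have [g22 g11] := so_sub_of_dim_neq2 offdiag_setting_V2 q_neq2.
apply: so12A; first exact: (lie_generated_subalgebra _).1.
by move=> _ [[x [x' ->]] | [y [y' ->]]]; [apply: g11 | apply: g22].
Qed.

End OffdiagBlock.

Theorem mainTheorem3 (R : rcfType) (p q : nat) (F : 'M[R]_(p + q)) :
  skew_mx F ->
  F <> 0 ->
  (forall x x' : 'cV[R]_p, form2 F (inV1 q x) (inV1 q x') = 0) ->
  (forall y y' : 'cV[R]_q, form2 F (inV2 p y) (inV2 p y') = 0) ->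
  ~ (p = 2%N /\ q = 2%N) ->
  forall A : 'M[R]_(p + q), lie_generated (gens F) A <-> so12 A.
Proof.
move=> skF F_neq0 F11 F22 not22 A.
have F_offdiag := skew_offdiag_block skF F11 F22.
have M_neq0 : dlsubmx F != 0.
  by apply/eqP => M0; apply: F_neq0; rewrite F_offdiag M0 trmx0 oppr0 block_mx0.
by rewrite F_offdiag; apply: lie_generated_offdiag.
Qed.
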